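(* Let $\mathcal{D}$ be a proof in $\mathsf{NIKm}$ of the polarised nested sequent $\Sigma$. Then there is a proof in $\mathbf{C}_{\mathbf{IK}}$ of the flat bi-nested sequent $\mathrm{fl}(\Sigma)$.
   Context: Formulas are generated by $A::=p\mid\bot\mid\top\mid A\wedge A\mid A\vee A\mid A\supset A\mid\Box A\mid\Diamond A$. Polarised nested sequents: either empty or $A_1^\bullet,\dots,A_k^\bullet,B_1^\circ,\dots,B_h^\circ,[\Sigma_1],\dots,[\Sigma_n]$ (a multiset), with $A_i,B_j$ formulas, $\Sigma_l$ polarised nested sequents; $^\bullet$ marks input (left) and $^\circ$ output (right) formulas. A polarised context $\Sigma\{\ \}$ is a polarised nested sequent with a hole in place of one formula occurrence (at some node of its tree); $\Sigma\{\Pi\}$ fills the hole with the polarised nested sequent $\Pi$ (its formulas and blocks are added at that node). $\Sigma^\downarrow\{\ \}$ denotes $\Sigma\{\ \}$ with all output formulas removed everywhere. The rules of $\mathsf{NIKm}$ (premisses / conclusion) are: axioms $\Sigma\{\bot^\bullet\}$ and $\Sigma\{p^\bullet,p^\circ\}$; $(\wedge^\bullet)$ $\Sigma\{A^\bullet,B^\bullet\}$ / $\Sigma\{(A\wedge B)^\bullet\}$; $(\wedge^\circ)$ $\Sigma\{A^\circ\}$, $\Sigma\{B^\circ\}$ / $\Sigma\{(A\wedge B)^\circ\}$; $(\vee^\bullet)$ $\Sigma\{A^\bullet\}$, $\Sigma\{B^\bullet\}$ / $\Sigma\{(A\vee B)^\bullet\}$; $(\vee^\circ)$ $\Sigma\{A^\circ,B^\circ\}$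 / $\Sigma\{(A\vee B)^\circ\}$; $(\supset^\bullet)$ $\Sigma\{A^\circ\}$, $\Sigma\{B^\bullet\}$ / $\Sigma\{(A\supset B)^\bullet\}$; $(\supset^\circ)$ $\Sigma^\downarrow\{A^\bullet,B^\circ\}$ / $\Sigma\{(A\supset B)^\circ\}$; $(\Box^\bullet)$ $\Sigma\{[\Delta,A^\bullet]\}$ / $\Sigma\{(\Box A)^\bullet,[\Delta]\}$; $(\Box^\circ)$ $\Sigma^\downarrow\{[A^\circ]\}$ / $\Sigma\{(\Box A)^\circ\}$; $(\Diamond^\bullet)$ $\Sigma\{[A^\bullet]\}$ / $\Sigma\{(\Diamond A)^\bullet\}$; $(\Diamond^\circ)$ $\Sigma\{[\Delta,A^\circ]\}$ / $\Sigma\{(\Diamond A)^\circ,[\Delta]\}$; contractions $\Sigma\{A^\bullet,A^\bullet\}$ / $\Sigma\{A^\bullet\}$ and $\Sigma\{A^\circ,A^\circ\}$ / $\Sigma\{A^\circ\}$. A proof is a finite tree of such rule instances with all leaves axioms. Translation: for a polarised nested sequent $\Sigma=A_1^\bullet,\dots,A_k^\bullet,B_1^\circ,\dots,B_h^\circ,[\Sigma_1],\dots,[\Sigma_n]$, $\mathrm{fl}(\Sigma)$ is the bi-nested sequent $A_1,\dots,A_k\Rightarrow B_1,\dots,B_h,[\mathrm{fl}(\Sigma_1)],\dots,[\mathrm{fl}(\Sigma_n)]$ (containing no implication blocks). Bi-nested sequents: the empty sequent $\Rightarrow$ is one; if $\Gamma,\Delta'$ are finite multisets of formulas and $S_1,\dots,S_m,T_1,\dots,T_n$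 are bi-nested sequents then $\Gamma\Rightarrow\Delta',\langle S_1\rangle,\dots,\langle S_m\rangle,[T_1],\dots,[T_n]$ is one ($\langle S\rangle$ implication block, $[T]$ modal block). A context $G\{\ \}$ is either the hole $\{\ \}$, or $\Gamma\Rightarrow\Delta,\langle G'\{\ \}\rangle$, or $\Gamma\Rightarrow\Delta,[G'\{\ \}]$; $G\{S\}$ fills the hole with $S$. For a consequent $\Delta$, $\Delta^*$ is $\emptyset$ if $\Delta$ has no modal block, and if $\Delta=\Delta_0,[\Lambda_1\Rightarrow\Theta_1],\dots,[\Lambda_k\Rightarrow\Theta_k]$ with $\Delta_0$ free of modal blocks, $\Delta^*=[\Lambda_1\Rightarrow\Theta_1^*],\dots,[\Lambda_k\Rightarrow\Theta_k^*]$. The calculus $\mathbf{C}_{\mathbf{IK}}$ (premisses / conclusion): axioms $G\{\Gamma,\bot\Rightarrow\Delta\}$, $G\{\Gamma\Rightarrow\top,\Delta\}$, $G\{\Gamma,p\Rightarrow\Delta,p\}$ ($p$ atomic); $(\wedge_L)$ $G\{A,B,\Gamma\Rightarrow\Delta\}$ / $G\{A\wedge B,\Gamma\Rightarrow\Delta\}$; $(\wedge_R)$ $G\{\Gamma\Rightarrow\Delta,A\}$, $G\{\Gamma\Rightarrow\Delta,B\}$ / $G\{\Gamma\Rightarrow\Delta,A\wedge B\}$; $(\vee_L)$ $G\{\Gamma,A\Rightarrow\Delta\}$, $G\{\Gamma,B\Rightarrow\Delta\}$ / $G\{\Gamma,A\vee B\Rightarrow\Delta\}$; $(\vee_R)$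 $G\{\Gamma\Rightarrow\Delta,A,B\}$ / $G\{\Gamma\Rightarrow\Delta,A\vee B\}$; $(\supset_L)$ $G\{\Gamma,A\supset B\Rightarrow A,\Delta\}$, $G\{\Gamma,B\Rightarrow\Delta\}$ / $G\{\Gamma,A\supset B\Rightarrow\Delta\}$; $(\supset_R)$ $G\{\Gamma\Rightarrow\Delta,\langle A\Rightarrow B\rangle\}$ / $G\{\Gamma\Rightarrow\Delta,A\supset B\}$; $(\Box_L)$ $G\{\Gamma,\Box A\Rightarrow\Delta,[\Sigma,A\Rightarrow\Pi]\}$ / $G\{\Gamma,\Box A\Rightarrow\Delta,[\Sigma\Rightarrow\Pi]\}$; $(\Box_R)$ $G\{\Gamma\Rightarrow\Delta,\langle\,\Rightarrow[\,\Rightarrow A]\rangle\}$ / $G\{\Gamma\Rightarrow\Delta,\Box A\}$; $(\Diamond_L)$ $G\{\Gamma\Rightarrow\Delta,[A\Rightarrow\,]\}$ / $G\{\Gamma,\Diamond A\Rightarrow\Delta\}$; $(\Diamond_R)$ $G\{\Gamma\Rightarrow\Delta,\Diamond A,[\Sigma\Rightarrow\Pi,A]\}$ / $G\{\Gamma\Rightarrow\Delta,\Diamond A,[\Sigma\Rightarrow\Pi]\}$; (trans) $G\{\Gamma,\Gamma'\Rightarrow\Delta,\langle\Gamma',\Sigma\Rightarrow\Pi\rangle\}$ / $G\{\Gamma,\Gamma'\Rightarrow\Delta,\langle\Sigma\Rightarrow\Pi\rangle\}$; $(\mathrm{inter}_{fc})$ $G\{\Gamma\Rightarrow\Delta,\langle\Sigma\Rightarrow\Pi,[\Lambda\Rightarrow\Theta^*]\rangle,[\Lambda\Rightarrow\Theta]\}$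 / $G\{\Gamma\Rightarrow\Delta,\langle\Sigma\Rightarrow\Pi\rangle,[\Lambda\Rightarrow\Theta]\}$; $(\mathrm{inter}_{bc})$ $G\{\Gamma\Rightarrow\Delta,[\Lambda\Rightarrow\Theta,\langle\Sigma\Rightarrow\Pi\rangle],\langle\,\Rightarrow[\Sigma\Rightarrow\Pi]\rangle\}$ / $G\{\Gamma\Rightarrow\Delta,[\Lambda\Rightarrow\Theta,\langle\Sigma\Rightarrow\Pi\rangle]\}$. A proof of $S$ is a finite tree of sequents built with these rules, with root $S$ and all leaves axioms. *)

(* plain lists, multisets handled via explicit exchange rules. *)
From Stdlib Require Import List Permutation.
Import ListNotations.

Inductive form : Type :=
| Var : nat -> form
| Bot : form
| Top : form
| And : form -> form -> form
| Or  : form -> form -> form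
| Imp : form -> form -> form
| Box : form -> form
| Dia : form -> form.

(* PS inputs outputs blocks  ==  inputs^•, outputs^°, [blocks] (a multiset;
   the list order is irrelevant thanks to the exchange rule below). *)
Inductive pseq : Type :=
| PS : list form -> list form -> list pseq -> pseq.

(* PHole G D B : the node containing the hole, whose other content is G^•,D^°,[B].
   PDown G D B c : a node with content G^•,D^°,[B] and one more block [c]. *)
Inductive pctx : Type :=
| PHole : list form -> list form -> list pseq -> pctx
| PDown : list form -> list form -> list pseq -> pctx -> pctx.

Fixpoint pfill (c : pctx) (p : pseq) : pseq :=
  match c with
  | PHole G D B => match p with PS G' D' B' => PS (G ++ G') (D ++ D') (B ++ B') end
  | PDown G D B c' => PS G D (pfill c' p :: B)
  end.

Fixpoint perase (s : pseq) : pseq :=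
  match s with PS G _ B => PS G [] (map perase B) end.

Fixpoint pdown (c : pctx) : pctx :=
  match c with
  | PHole G _ B => PHole G [] (map perase B)
  | PDown G _ B c' => PDown G [] (map perase B) (pdown c')
  end.

Definition pin (A : form) : pseq := PS [A] [] [].
Definition pout (A : form) : pseq := PS [] [A] [].

Inductive nikm : pseq -> Prop :=
| nikm_exch : forall c G D B G' D' B',
    Permutation G G' -> Permutation D D' -> Permutation B B' ->
    nikm (pfill c (PS G D B)) -> nikm (pfill c (PS G' D' B'))
| nikm_bot : forall c, nikm (pfill c (pin Bot))
| nikm_ax : forall c p, nikm (pfill c (PS [Var p] [Var p] []))
| nikm_and_in : forall c A B,
    nikm (pfill c (PS [A; B] [] [])) -> nikm (pfill c (pin (And A B)))
| nikm_and_out : forall c A B,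
    nikm (pfill c (pout A)) -> nikm (pfill c (pout B)) -> nikm (pfill c (pout (And A B)))
| nikm_or_in : forall c A B,
    nikm (pfill c (pin A)) -> nikm (pfill c (pin B)) -> nikm (pfill c (pin (Or A B)))
| nikm_or_out : forall c A B,
    nikm (pfill c (PS [] [A; B] [])) -> nikm (pfill c (pout (Or A B)))
| nikm_imp_in : forall c A B,
    nikm (pfill c (pout A)) -> nikm (pfill c (pin B)) -> nikm (pfill c (pin (Imp A B)))
| nikm_imp_out : forall c A B,
    nikm (pfill (pdown c) (PS [A] [B] [])) -> nikm (pfill c (pout (Imp A B)))
| nikm_box_in : forall c A G D B,
    nikm (pfill c (PS [] [] [PS (A :: G) D B])) ->
    nikm (pfill c (PS [Box A] [] [PS G D B]))
| nikm_box_out : forall c A,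
    nikm (pfill (pdown c) (PS [] [] [pout A])) -> nikm (pfill c (pout (Box A)))
| nikm_dia_in : forall c A,
    nikm (pfill c (PS [] [] [pin A])) -> nikm (pfill c (pin (Dia A)))
| nikm_dia_out : forall c A G D B,
    nikm (pfill c (PS [] [] [PS G (A :: D) B])) ->
    nikm (pfill c (PS [] [Dia A] [PS G D B]))
| nikm_ctr_in : forall c A,
    nikm (pfill c (PS [A; A] [] [])) -> nikm (pfill c (pin A))
| nikm_ctr_out : forall c A,
    nikm (pfill c (PS [] [A; A] [])) -> nikm (pfill c (pout A)).

(* BS Gamma Delta Imps Mods == Gamma => Delta, <Imps>, [Mods] (multisets). *)
Inductive bseq : Type :=
| BS : list form -> list form -> list bseq -> list bseq -> bseq.

(* Contexts G{ }: the hole, or Gamma => Delta, <G'{ }>, or Gamma => Delta, [G'{ }],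
   where the consequent Delta = formulas Df, implication blocks Is, modal blocks M. *)
Inductive bctx : Type :=
| BHole : bctx
| BImp : list form -> list form -> list bseq -> list bseq -> bctx -> bctx
| BMod : list form -> list form -> list bseq -> list bseq -> bctx -> bctx.

Fixpoint bfill (c : bctx) (s : bseq) : bseq :=
  match c with
  | BHole => s
  | BImp G D Is M c' => BS G D (bfill c' s :: Is) M
  | BMod G D Is M c' => BS G D Is (bfill c' s :: M)
  end.

Fixpoint bstar (s : bseq) : bseq :=
  match s with BS L _ _ M => BS L [] [] (map bstar M) end.

Inductive cik : bseq -> Prop :=
| cik_exch : forall c G D Is M G' D' Is' M',
    Permutation G G' -> Permutation D D' -> Permutation Is Is' -> Permutation M M' ->
    cik (bfill c (BS G D Is M)) -> cik (bfill c (BS G' D' Is' M'))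
| cik_bot : forall c G D Is M, cik (bfill c (BS (Bot :: G) D Is M))
| cik_top : forall c G D Is M, cik (bfill c (BS G (Top :: D) Is M))
| cik_ax : forall c p G D Is M, cik (bfill c (BS (Var p :: G) (Var p :: D) Is M))
| cik_andL : forall c A B G D Is M,
    cik (bfill c (BS (A :: B :: G) D Is M)) -> cik (bfill c (BS (And A B :: G) D Is M))
| cik_andR : forall c A B G D Is M,
    cik (bfill c (BS G (A :: D) Is M)) -> cik (bfill c (BS G (B :: D) Is M)) ->
    cik (bfill c (BS G (And A B :: D) Is M))
| cik_orL : forall c A B G D Is M,
    cik (bfill c (BS (A :: G) D Is M)) -> cik (bfill c (BS (B :: G) D Is M)) ->
    cik (bfill c (BS (Or A B :: G) D Is M))
| cik_orR : forall c A B G D Is M,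
    cik (bfill c (BS G (A :: B :: D) Is M)) -> cik (bfill c (BS G (Or A B :: D) Is M))
| cik_impL : forall c A B G D Is M,
    cik (bfill c (BS (Imp A B :: G) (A :: D) Is M)) -> cik (bfill c (BS (B :: G) D Is M)) ->
    cik (bfill c (BS (Imp A B :: G) D Is M))
| cik_impR : forall c A B G D Is M,
    cik (bfill c (BS G D (BS [A] [B] [] [] :: Is) M)) ->
    cik (bfill c (BS G (Imp A B :: D) Is M))
| cik_boxL : forall c A G D Is M S P PI PM,
    cik (bfill c (BS (Box A :: G) D Is (BS (A :: S) P PI PM :: M))) ->
    cik (bfill c (BS (Box A :: G) D Is (BS S P PI PM :: M)))
| cik_boxR : forall c A G D Is M,
    cik (bfill c (BS G D (BS [] [] [] [BS [] [A] [] []] :: Is) M)) ->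
    cik (bfill c (BS G (Box A :: D) Is M))
| cik_diaL : forall c A G D Is M,
    cik (bfill c (BS G D Is (BS [A] [] [] [] :: M))) ->
    cik (bfill c (BS (Dia A :: G) D Is M))
| cik_diaR : forall c A G D Is M S P PI PM,
    cik (bfill c (BS G (Dia A :: D) Is (BS S (A :: P) PI PM :: M))) ->
    cik (bfill c (BS G (Dia A :: D) Is (BS S P PI PM :: M)))
| cik_trans : forall c G G' D Is M S P PI PM,
    cik (bfill c (BS (G ++ G') D (BS (G' ++ S) P PI PM :: Is) M)) ->
    cik (bfill c (BS (G ++ G') D (BS S P PI PM :: Is) M))
| cik_inter_fc : forall c G D Is M S P PI PM T,
    cik (bfill c (BS G D (BS S P PI (bstar T :: PM) :: Is) (T :: M))) ->
    cik (bfill c (BS G D (BS S P PI PM :: Is) (T :: M)))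
| cik_inter_bc : forall c G D Is M L Th ThI ThM Q,
    cik (bfill c (BS G D (BS [] [] [] [Q] :: Is) (BS L Th (Q :: ThI) ThM :: M))) ->
    cik (bfill c (BS G D Is (BS L Th (Q :: ThI) ThM :: M))).

Fixpoint fl (s : pseq) : bseq :=
  match s with PS G D B => BS G D [] (map fl B) end.

From Stdlib Require Import List Permutation.
Import ListNotations.

(* Every rule of NIKm is simulated in C_IK through [fl].  As C_IK is not cumulative and has
   no structural rule besides exchange, the work lies in showing that derivability is closed
   under [cover]: a formula of one node is covered when it occurs in the corresponding node
   of the other sequent or can be recovered there by inverting the logical rules ([lcov],
   [rcov]), and a block is covered by some block of the corresponding node.  This single
   relation subsumes weakening, contraction (several blocks may share one cover) and
   invertibility, and every C_IK rule preserves it at the node where it acts.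
   The local NIKm rules then become single C_IK rules up to reordering.  The right rules
   for implication and box, whose premisses erase all outputs, open an implication block at
   the hole and fill it with the erased sequent by pushing it up to the root. *)

#[local] Hint Resolve in_eq in_cons : core.

Ltac solve_incl :=
  let x := fresh "x" in let Hx := fresh "Hx" in
  intros x Hx; simpl in Hx |- *; rewrite ?in_app_iff in Hx; rewrite ?in_app_iff;
  simpl in Hx |- *; tauto.

(** * Covering *)

Definition bant (s : bseq) : list form := match s with BS G _ _ _ => G end.
Definition bsuc (s : bseq) : list form := match s with BS _ D _ _ => D end.
Definition bimps (s : bseq) : list bseq := match s with BS _ _ J _ => J end.
Definition bmods (s : bseq) : list bseq := match s with BS _ _ _ M => M end.

Fixpoint bseq_ind_nested (P : bseq -> Prop)
  (H : forall G D Is M, (forall X, In X Is -> P X) -> (forall X, In X M -> P X) ->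
       P (BS G D Is M)) (s : bseq) : P s :=
  let fix all (l : list bseq) : forall X, In X l -> P X :=
    match l with
    | [] => fun X (HX : In X []) => match HX with end
    | Y :: l' => fun X HX =>
        match HX with
        | or_introl E => eq_ind Y P (bseq_ind_nested P H Y) X E
        | or_intror HX' => all l' X HX'
        end
    end in
  match s with BS G D Is M => H G D Is M (all Is) (all M) end.

Fixpoint lcov (F : form) (G : list form) (M : list bseq) : Prop :=
  In F G \/
  match F with
  | And A B => lcov A G M /\ lcov B G M
  | Or A B => lcov A G M \/ lcov B G M
  | Imp A B => lcov B G M
  | Dia A => exists T, In T M /\ lcov A (bant T) (bmods T)
  | _ => False
  end.

Fixpoint rcov (F : form) (D : list form) (Is : list bseq) : Prop :=
  In F D \/
  match F with
  | And A B => rcov A D Is \/ rcov B D Is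
  | Or A B => rcov A D Is /\ rcov B D Is
  | Imp A B => exists J, In J Is /\ lcov A (bant J) (bmods J) /\ rcov B (bsuc J) (bimps J)
  | Box A => exists J, In J Is /\ exists T, In T (bmods J) /\ rcov A (bsuc T) (bimps T)
  | _ => False
  end.

Inductive cover : bseq -> bseq -> Prop :=
| cover_intro G D Is M Y :
    (forall A, In A G -> lcov A (bant Y) (bmods Y)) ->
    (forall A, In A D -> rcov A (bsuc Y) (bimps Y)) ->
    (forall X, In X Is -> exists X', In X' (bimps Y) /\ cover X X') ->
    (forall X, In X M -> exists X', In X' (bmods Y) /\ cover X X') ->
    cover (BS G D Is M) Y.

Lemma cover_inv G D Is M Y : cover (BS G D Is M) Y ->
  (forall A, In A G -> lcov A (bant Y) (bmods Y)) /\
  (forall A, In A D -> rcov A (bsuc Y) (bimps Y)) /\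
  (forall X, In X Is -> exists X', In X' (bimps Y) /\ cover X X') /\
  (forall X, In X M -> exists X', In X' (bmods Y) /\ cover X X').
Proof. now inversion 1. Qed.

Lemma lcov_in F G M : In F G -> lcov F G M.
Proof. destruct F; simpl; auto. Qed.

Lemma rcov_in F D Is : In F D -> rcov F D Is.
Proof. destruct F; simpl; auto. Qed.

#[local] Hint Resolve lcov_in rcov_in : core.

Lemma cover_refl X : cover X X.
Proof.
  induction X as [G D Is M IHI IHM] using bseq_ind_nested.
  constructor; simpl; eauto.
Qed.

#[local] Hint Resolve cover_refl : core.

Lemma cover_incl G D Is M G' D' Is' M' :
  incl G G' -> incl D D' -> incl Is Is' -> incl M M' ->
  cover (BS G D Is M) (BS G' D' Is' M').
Proof. constructor; simpl; eauto. Qed.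

Definition lcov_incl (T T' : bseq) : Prop :=
  forall F, lcov F (bant T) (bmods T) -> lcov F (bant T') (bmods T').

Lemma lcov_trans F G M G' M' : lcov F G M ->
  (forall A, In A G -> lcov A G' M') ->
  (forall T, In T M -> exists T', In T' M' /\ lcov_incl T T') -> lcov F G' M'.
Proof.
  revert G M G' M'; induction F; intros G M G' M' H HG HM; simpl in H;
    (destruct H as [H|H]; [now apply HG|]); simpl; right; try tauto.
  - destruct H; split; eauto.
  - destruct H; [left|right]; eauto.
  - eauto.
  - destruct H as (T & HT & H). destruct (HM T HT) as (T' & HT' & Hs). eauto.
Qed.

Lemma cover_lcov_incl T T' : cover T T' -> lcov_incl T T'.
Proof.
  intros HT F; revert T T' HT; induction F; intros [G D Is M] T' HT H;
    apply cover_inv in HT; destruct HT as (HG & HD & HI & HM); simpl in H;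
    (destruct H as [H|H]; [now apply HG|]); simpl; right; try tauto.
  - destruct H; split; [eapply IHF1 | eapply IHF2]; try constructor; eauto.
  - destruct H; [left; eapply IHF1 | right; eapply IHF2]; try constructor; eauto.
  - eapply IHF2; try constructor; eauto.
  - destruct H as (T & HT & H). destruct (HM T HT) as (T'' & HT'' & Hc). eauto.
Qed.

Lemma rcov_cover F D Is Y : rcov F D Is ->
  (forall A, In A D -> rcov A (bsuc Y) (bimps Y)) ->
  (forall X, In X Is -> exists X', In X' (bimps Y) /\ cover X X') ->
  rcov F (bsuc Y) (bimps Y).
Proof.
  revert D Is Y; induction F; intros D Is Y H HD HI; simpl in H;
    (destruct H as [H|H]; [now apply HD|]); simpl; right; try tauto.
  - destruct H; [left|right]; eauto.
  - destruct H; split; eauto.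
  - destruct H as (J & HJ & HA & HB). destruct (HI J HJ) as (J' & HJ' & Hc).
    exists J'; split; [exact HJ'|]. split; [exact (cover_lcov_incl _ _ Hc _ HA)|].
    destruct J; apply cover_inv in Hc; destruct Hc as (_ & ? & ? & _); eapply IHF2; eauto.
  - destruct H as (J & HJ & T & HT & HA). destruct (HI J HJ) as (J' & HJ' & Hc).
    exists J'; split; [exact HJ'|].
    destruct J; apply cover_inv in Hc; destruct Hc as (_ & _ & _ & HM).
    destruct (HM T HT) as (T' & HT' & HcT). exists T'; split; [exact HT'|].
    destruct T; apply cover_inv in HcT; destruct HcT as (_ & ? & ? & _); eapply IHF; eauto.
Qed.

Lemma cover_trans X Y Z : cover X Y -> cover Y Z -> cover X Z.
Proof.
  revert Y Z; induction X as [G D Is M IHI IHM] using bseq_ind_nested.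
  intros [G' D' Is' M'] Z HXY HYZ.
  apply cover_inv in HXY; destruct HXY as (HG & HD & HI & HM).
  pose proof (cover_inv _ _ _ _ _ HYZ) as (HG' & HD' & HI' & HM'); simpl in *.
  constructor.
  - intros A HA. eapply lcov_trans; [now apply HG | exact HG' |].
    intros T HT. destruct (HM' T HT) as (T' & ? & ?). eauto using cover_lcov_incl.
  - intros A HA. eapply rcov_cover; eauto.
  - intros X HX. destruct (HI X HX) as (Y & HY & ?). destruct (HI' Y HY) as (Z' & ? & ?). eauto.
  - intros X HX. destruct (HM X HX) as (Y & HY & ?). destruct (HM' Y HY) as (Z' & ? & ?). eauto.
Qed.

Lemma lcov_map_bstar F G M : lcov F G M -> lcov F G (map bstar M).
Proof.
  revert G M; induction F; intros G M H; simpl in H |- *; try tauto.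
  - destruct H as [H|[H1 H2]]; auto.
  - destruct H as [H|[H1|H1]]; auto.
  - destruct H; auto.
  - destruct H as [H|(T & HT & H)]; auto. right. exists (bstar T).
    split; [now apply in_map|]. destruct T; simpl in *; auto.
Qed.

Lemma lcov_incl_bstar T : lcov_incl T (bstar T).
Proof. intros F H. destruct T; simpl in *. now apply lcov_map_bstar. Qed.

Lemma cover_bstar T T' : cover T T' -> cover (bstar T) (bstar T').
Proof.
  revert T'; induction T as [G D Is M _ IHM] using bseq_ind_nested.
  intros [G' D' Is' M'] H. apply cover_inv in H; destruct H as (HG & _ & _ & HM).
  constructor; simpl in *; try easy.
  - intros A HA. apply lcov_map_bstar; auto.
  - intros X HX. apply in_map_iff in HX. destruct HX as (Y & <- & HY).
    destruct (HM Y HY) as (Y' & ? & ?). exists (bstar Y'). split; [apply in_map|]; auto.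
Qed.

Lemma cover_ctx c X Y : cover X Y -> cover (bfill c X) (bfill c Y).
Proof.
  induction c as [| G D Is M c IH | G D Is M c IH]; intro H; simpl; [exact H| |];
    constructor; simpl; auto; try intros Z [<-|HZ]; eauto.
Qed.

(** * Admissibility of covering *)

Fixpoint bctx_comp (c1 c2 : bctx) : bctx :=
  match c1 with
  | BHole => c2
  | BImp G D Is M c => BImp G D Is M (bctx_comp c c2)
  | BMod G D Is M c => BMod G D Is M (bctx_comp c c2)
  end.

Lemma bfill_comp c1 c2 X : bfill (bctx_comp c1 c2) X = bfill c1 (bfill c2 X).
Proof. induction c1; simpl; congruence. Qed.

Lemma cik_fill S c : cik S -> cik (bfill c S).
Proof.
  intro H; revert c; induction H; intro cc; rewrite <- ?bfill_comp.
  all: first [ apply cik_bot | apply cik_top | apply cik_ax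
             | eapply cik_exch; [eassumption ..|]
             | apply cik_andL | apply cik_andR | apply cik_orL | apply cik_orR
             | apply cik_impL | apply cik_impR | apply cik_boxL | apply cik_boxR
             | apply cik_diaL | apply cik_diaR | apply cik_trans | apply cik_inter_fc
             | apply cik_inter_bc ]; rewrite bfill_comp; auto.
Qed.

Definition cik_replaceable (S S' : bseq) : Prop :=
  forall c, cik (bfill c S) -> cik (bfill c S').

Lemma cik_replaceable_ctx c S S' :
  cik_replaceable S S' -> cik_replaceable (bfill c S) (bfill c S').
Proof. intros H c' Hc. rewrite <- bfill_comp in *. auto. Qed.

Lemma in_perm {A} (x : A) l : In x l -> exists l', Permutation l (x :: l').
Proof.
  intro H. apply in_split in H. destruct H as (l1 & l2 & ->).
  exists (l1 ++ l2). symmetry. apply Permutation_middle.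
Qed.

Lemma cover_perm_l G D Is M G' D' Is' M' Y :
  Permutation G G' -> Permutation D D' -> Permutation Is Is' -> Permutation M M' ->
  cover (BS G D Is M) Y -> cover (BS G' D' Is' M') Y.
Proof.
  intros HG HD HI HM H. apply cover_inv in H. destruct H as (H1 & H2 & H3 & H4).
  constructor; intros ? Hx; symmetry in HG, HD, HI, HM;
    [apply H1 | apply H2 | apply H3 | apply H4]; eapply Permutation_in; eauto.
Qed.

Lemma cover_perm_r G D Is M G' D' Is' M' :
  Permutation G G' -> Permutation D D' -> Permutation Is Is' -> Permutation M M' ->
  cover (BS G D Is M) (BS G' D' Is' M').
Proof.
  intros HG HD HI HM. apply cover_incl; intros ? ?; eapply Permutation_in; eauto.
Qed.

Lemma cover_some_perm L T L' T' Z :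
  Permutation L (T :: L') -> cover T T' ->
  (exists Z', In Z' L /\ cover Z Z') -> exists Z', In Z' (T' :: L') /\ cover Z Z'.
Proof.
  intros HP HT (Z' & HZ' & HZ). apply (Permutation_in _ HP) in HZ'.
  destruct HZ' as [<-|HZ']; eauto using cover_trans.
Qed.

Lemma cover_extend G D Is M G' D' Is' M' Y : cover (BS G D Is M) Y ->
  (forall A, In A G' -> In A G \/ lcov A (bant Y) (bmods Y)) ->
  (forall A, In A D' -> In A D \/ rcov A (bsuc Y) (bimps Y)) ->
  (forall X, In X Is' -> In X Is \/ exists X', In X' (bimps Y) /\ cover X X') ->
  (forall X, In X M' -> In X M \/ exists X', In X' (bmods Y) /\ cover X X') ->
  cover (BS G' D' Is' M') Y.
Proof.
  intros H HG HD HI HM. apply cover_inv in H. destruct H as (H1 & H2 & H3 & H4).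
  constructor; intros x Hx;
    [destruct (HG x Hx) | destruct (HD x Hx) | destruct (HI x Hx) | destruct (HM x Hx)]; auto.
Qed.

Definition fill_decomposition (c : bctx) (X S : bseq) : Prop :=
  exists c' X', cik_replaceable (bfill c' X') S /\ cover S (bfill c' X') /\ cover X X' /\
    (forall Y Y', cover X' Y' -> cover Y Y' -> cover (bfill c Y) (bfill c' Y')).

Lemma fill_decomposition_imp G D Is M c X G' D' Is' M' T :
  cover (BS G D (bfill c X :: Is) M) (BS G' D' Is' M') -> In T Is' ->
  fill_decomposition c X T -> fill_decomposition (BImp G D Is M c) X (BS G' D' Is' M').
Proof.
  intros H HT (c1 & X1 & Hr & Hb & HX1 & Hd). destruct (in_perm _ _ HT) as (Is2 & HP).
  assert (Hb' : cover (BS G' D' Is' M') (BS G' D' (bfill c1 X1 :: Is2) M')).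
  { constructor; cbn [bant bsuc bimps bmods]; eauto.
    intros Z HZ. eapply cover_some_perm; eauto. }
  exists (BImp G' D' Is2 M' c1), X1; cbn [bfill].
  split; [|split; [exact Hb'|split; [exact HX1|]]].
  - intros c' Hc. apply (cik_exch _ _ _ _ _ _ _ _ _ (Permutation_refl _) (Permutation_refl _)
                          (Permutation_sym HP) (Permutation_refl _)).
    exact (cik_replaceable_ctx (BImp G' D' Is2 M' BHole) _ _ Hr c' Hc).
  - intros Y Y' HY HXY.
    assert (HS : cover (BS G D (bfill c X :: Is) M) (BS G' D' (bfill c1 Y' :: Is2) M')).
    { eapply cover_trans; [exact H|]. eapply cover_trans; [exact Hb'|].
      exact (cover_ctx (BImp G' D' Is2 M' c1) _ _ HY). }
    apply (cover_extend _ _ _ _ _ _ _ _ _ HS); [intros x Hx; now left .. | |intros x Hx; now left].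
    intros Z [<-|HZ]; [right | left; now right].
    exists (bfill c1 Y'). split; [now left | now apply Hd].
Qed.

Lemma fill_decomposition_mod G D Is M c X G' D' Is' M' T :
  cover (BS G D Is (bfill c X :: M)) (BS G' D' Is' M') -> In T M' ->
  fill_decomposition c X T -> fill_decomposition (BMod G D Is M c) X (BS G' D' Is' M').
Proof.
  intros H HT (c1 & X1 & Hr & Hb & HX1 & Hd). destruct (in_perm _ _ HT) as (M2 & HP).
  assert (Hb' : cover (BS G' D' Is' M') (BS G' D' Is' (bfill c1 X1 :: M2))).
  { constructor; cbn [bant bsuc bimps bmods]; eauto.
    intros Z HZ. eapply cover_some_perm; eauto. }
  exists (BMod G' D' Is' M2 c1), X1; cbn [bfill].
  split; [|split; [exact Hb'|split; [exact HX1|]]].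
  - intros c' Hc. apply (cik_exch _ _ _ _ _ _ _ _ _ (Permutation_refl _) (Permutation_refl _)
                          (Permutation_refl _) (Permutation_sym HP)).
    exact (cik_replaceable_ctx (BMod G' D' Is' M2 BHole) _ _ Hr c' Hc).
  - intros Y Y' HY HXY.
    assert (HS : cover (BS G D Is (bfill c X :: M)) (BS G' D' Is' (bfill c1 Y' :: M2))).
    { eapply cover_trans; [exact H|]. eapply cover_trans; [exact Hb'|].
      exact (cover_ctx (BMod G' D' Is' M2 c1) _ _ HY). }
    apply (cover_extend _ _ _ _ _ _ _ _ _ HS); [intros x Hx; now left .. |].
    intros Z [<-|HZ]; [right | left; now right].
    exists (bfill c1 Y'). split; [now left | now apply Hd].
Qed.

Lemma cover_fill_inv c X S : cover (bfill c X) S -> fill_decomposition c X S.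
Proof.
  revert X S; induction c as [| G D Is M c IH | G D Is M c IH]; intros X [G' D' Is' M'] H.
  - exists BHole, (BS G' D' Is' M'). split; [now intros c'|]. auto.
  - cbn [bfill] in H. pose proof (cover_inv _ _ _ _ _ H) as (_ & _ & HI & _).
    destruct (HI _ (in_eq _ _)) as (T & HT & HcT).
    exact (fill_decomposition_imp _ _ _ _ _ _ _ _ _ _ _ H HT (IH _ _ HcT)).
  - cbn [bfill] in H. pose proof (cover_inv _ _ _ _ _ H) as (_ & _ & _ & HM).
    destruct (HM _ (in_eq _ _)) as (T & HT & HcT).
    exact (fill_decomposition_mod _ _ _ _ _ _ _ _ _ _ _ H HT (IH _ _ HcT)).
Qed.

Lemma cover_sub G D Is M G' D' Is' M' Y : cover (BS G D Is M) Y ->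
  incl G' G -> incl D' D -> incl Is' Is -> incl M' M -> cover (BS G' D' Is' M') Y.
Proof. intros H ? ? ? ?. eapply cover_trans; [|exact H]. now apply cover_incl. Qed.

Ltac cover_by_sub H := apply (cover_sub _ _ _ _ _ _ _ _ _ H); solve_incl.
Ltac cover_by_incl := apply cover_incl; solve_incl.

Lemma cover_cons_ant A G D Is M Y : lcov A (bant Y) (bmods Y) ->
  cover (BS G D Is M) Y -> cover (BS (A :: G) D Is M) Y.
Proof.
  intros HA H. apply (cover_extend _ _ _ _ _ _ _ _ _ H); auto.
  intros B [<-|HB]; auto.
Qed.

Lemma cover_cons_suc A G D Is M Y : rcov A (bsuc Y) (bimps Y) ->
  cover (BS G D Is M) Y -> cover (BS G (A :: D) Is M) Y.
Proof.
  intros HA H. apply (cover_extend _ _ _ _ _ _ _ _ _ H); auto.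
  intros B [<-|HB]; auto.
Qed.

Lemma cover_cons_imps X X' G D Is M Y : In X' (bimps Y) -> cover X X' ->
  cover (BS G D Is M) Y -> cover (BS G D (X :: Is) M) Y.
Proof.
  intros HX' HX H. apply (cover_extend _ _ _ _ _ _ _ _ _ H); auto.
  intros Z [<-|HZ]; eauto.
Qed.

Lemma cover_cons_mods X X' G D Is M Y : In X' (bmods Y) -> cover X X' ->
  cover (BS G D Is M) Y -> cover (BS G D Is (X :: M)) Y.
Proof.
  intros HX' HX H. apply (cover_extend _ _ _ _ _ _ _ _ _ H); auto.
  intros Z [<-|HZ]; eauto.
Qed.

Lemma cik_inter_fc_many c G D Is M S P PI PM K : incl K M ->
  cik (bfill c (BS G D (BS S P PI (map bstar K ++ PM) :: Is) M)) ->
  cik (bfill c (BS G D (BS S P PI PM :: Is) M)).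
Proof.
  induction K as [|T K IHK]; intros HK H; [exact H|].
  apply IHK; [now apply incl_cons_inv in HK|].
  destruct (in_perm T M (HK T (in_eq _ _))) as (M2 & HP).
  apply (cik_exch _ _ _ _ _ _ _ _ _ (Permutation_refl _) (Permutation_refl _)
           (Permutation_refl _) (Permutation_sym HP)).
  apply cik_inter_fc.
  exact (cik_exch _ _ _ _ _ _ _ _ _ (Permutation_refl _) (Permutation_refl _)
           (Permutation_refl _) HP H).
Qed.

Lemma cik_trans_fc c G D Is M S P PI PM :
  cik (bfill c (BS G D (BS (G ++ S) P PI (map bstar M ++ PM) :: Is) M)) ->
  cik (bfill c (BS G D (BS S P PI PM :: Is) M)).
Proof.
  intro H. apply (cik_trans c [] G). apply (cik_inter_fc_many _ _ _ _ _ _ _ _ _ M); auto.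
  apply incl_refl.
Qed.

Definition node_goal (Ps : list bseq) (X : bseq) (c : bctx) (X' : bseq) : Prop :=
  cover X X' ->
  (forall P, In P Ps -> forall Y, cover X' Y -> cover P Y -> cik (bfill c Y)) ->
  cik (bfill c X').

Definition node_admissible (Ps : list bseq) (X : bseq) : Prop :=
  forall c X', node_goal Ps X c X'.

Lemma node_goal_perm Ps X c G D Is M G' D' Is' M' :
  Permutation G G' -> Permutation D D' -> Permutation Is Is' -> Permutation M M' ->
  node_goal Ps X c (BS G' D' Is' M') -> node_goal Ps X c (BS G D Is M).
Proof.
  intros HG HD HI HM H HX IH. symmetry in HG, HD, HI, HM.
  apply (cik_exch _ _ _ _ _ _ _ _ _ HG HD HI HM). apply H.
  - eapply cover_trans; [exact HX|]. now apply cover_perm_r.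
  - intros P HP Y HY. apply (IH P HP). eapply cover_trans; [|exact HY]. now apply cover_perm_r.
Qed.

Lemma use_premise Ps X c X' P Y : cover X X' ->
  (forall P, In P Ps -> forall Y, cover X' Y -> cover P Y -> cik (bfill c Y)) ->
  In P Ps -> cover X' Y -> (cover X Y -> cover P Y) -> cik (bfill c Y).
Proof. intros HX IH HP HY H. apply (IH P HP Y HY). apply H. now apply (cover_trans _ X'). Qed.

(* Covering decomposes along contexts, so a rule need only be checked at the node where it
   acts. *)
Lemma cik_cover_of_node c Ps X : node_admissible Ps X ->
  (forall P, In P Ps -> forall S, cover (bfill c P) S -> cik S) ->
  forall S, cover (bfill c X) S -> cik S.
Proof.
  intros Hn IH S HS. destruct (cover_fill_inv _ _ _ HS) as (c' & X' & Hr & _ & HX & Hd).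
  apply (Hr BHole). apply (Hn c' X' HX). intros P HP Y HXY HPY.
  exact (IH P HP _ (Hd P Y HXY HPY)).
Qed.

Ltac node_intros :=
  let Gs := fresh "Gs" in let Ds := fresh "Ds" in let Js := fresh "Js" in let Ms := fresh "Ms" in
  intros ? [Gs Ds Js Ms] HX IH;
  pose proof (cover_inv _ _ _ _ _ HX) as (HG & HD & HI & HM);
  cbn [bant bsuc bimps bmods] in HG, HD, HI, HM.

Ltac reorder G' D' Is' M' :=
  match goal with
  | HX : cover _ ?X', IH : forall P, In P _ -> forall Y, cover ?X' Y -> _ |- _ => revert HX IH
  end;
  apply (node_goal_perm _ _ _ _ _ _ _ G' D' Is' M');
  [first [assumption | reflexivity] .. | intros HX IH].

Ltac premise P :=
  match goal with
  | HX : cover _ ?X', IH : forall P, In P _ -> forall Y, cover ?X' Y -> _ |- _ =>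
      apply (use_premise _ _ _ _ P _ HX IH); [simpl; auto | | intros HXY]
  end.

Lemma exch_admissible G D Is M G' D' Is' M' :
  Permutation G G' -> Permutation D D' -> Permutation Is Is' -> Permutation M M' ->
  node_admissible [BS G D Is M] (BS G' D' Is' M').
Proof.
  intros HG HD HI HM c X' HX IH. apply (IH _ (in_eq _ _)); [apply cover_refl|].
  symmetry in HG, HD, HI, HM. exact (cover_perm_l _ _ _ _ _ _ _ _ _ HG HD HI HM HX).
Qed.

Lemma bot_admissible G D Is M : node_admissible [] (BS (Bot :: G) D Is M).
Proof.
  node_intros. destruct (HG _ (in_eq _ _)) as [Hin|[]].
  destruct (in_perm _ _ Hin) as (G2 & HP). reorder (Bot :: G2) Ds Js Ms. apply cik_bot.
Qed.

Lemma top_admissible G D Is M : node_admissible [] (BS G (Top :: D) Is M).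
Proof.
  node_intros. destruct (HD _ (in_eq _ _)) as [Hin|[]].
  destruct (in_perm _ _ Hin) as (D2 & HP). reorder Gs (Top :: D2) Js Ms. apply cik_top.
Qed.

Lemma ax_admissible p G D Is M : node_admissible [] (BS (Var p :: G) (Var p :: D) Is M).
Proof.
  node_intros. destruct (HG _ (in_eq _ _)) as [HinG|[]]. destruct (HD _ (in_eq _ _)) as [HinD|[]].
  destruct (in_perm _ _ HinG) as (G2 & HPG). destruct (in_perm _ _ HinD) as (D2 & HPD).
  reorder (Var p :: G2) (Var p :: D2) Js Ms. apply cik_ax.
Qed.

Lemma andL_admissible A B G D Is M :
  node_admissible [BS (A :: B :: G) D Is M] (BS (And A B :: G) D Is M).
Proof.
  node_intros. destruct (HG _ (in_eq _ _)) as [Hin|[HA HB]].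
  - destruct (in_perm _ _ Hin) as (G2 & HP). reorder (And A B :: G2) Ds Js Ms.
    apply cik_andL. premise (BS (A :: B :: G) D Is M).
    + apply cover_cons_ant; [simpl; auto|]. cover_by_incl.
    + apply cover_cons_ant; [simpl; auto|]. apply cover_cons_ant; [simpl; auto|].
      cover_by_sub HXY.
  - premise (BS (A :: B :: G) D Is M); [auto|].
    apply cover_cons_ant; [exact HA|]. apply cover_cons_ant; [exact HB|].
    cover_by_sub HXY.
Qed.

Lemma andR_admissible A B G D Is M :
  node_admissible [BS G (A :: D) Is M; BS G (B :: D) Is M] (BS G (And A B :: D) Is M).
Proof.
  node_intros. destruct (HD _ (in_eq _ _)) as [Hin|[HA|HB]].
  - destruct (in_perm _ _ Hin) as (D2 & HP). reorder Gs (And A B :: D2) Js Ms.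
    apply cik_andR; [premise (BS G (A :: D) Is M) | premise (BS G (B :: D) Is M)].
    all: apply cover_cons_suc; [simpl; auto|].
    all: first [cover_by_incl | cover_by_sub HXY].
  - premise (BS G (A :: D) Is M); [auto|]. apply cover_cons_suc; [exact HA|].
    cover_by_sub HXY.
  - premise (BS G (B :: D) Is M); [auto|]. apply cover_cons_suc; [exact HB|].
    cover_by_sub HXY.
Qed.

Lemma orL_admissible A B G D Is M :
  node_admissible [BS (A :: G) D Is M; BS (B :: G) D Is M] (BS (Or A B :: G) D Is M).
Proof.
  node_intros. destruct (HG _ (in_eq _ _)) as [Hin|[HA|HB]].
  - destruct (in_perm _ _ Hin) as (G2 & HP). reorder (Or A B :: G2) Ds Js Ms.
    apply cik_orL; [premise (BS (A :: G) D Is M) | premise (BS (B :: G) D Is M)].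
    all: apply cover_cons_ant; [simpl; auto|].
    all: first [cover_by_incl | cover_by_sub HXY].
  - premise (BS (A :: G) D Is M); [auto|]. apply cover_cons_ant; [exact HA|].
    cover_by_sub HXY.
  - premise (BS (B :: G) D Is M); [auto|]. apply cover_cons_ant; [exact HB|].
    cover_by_sub HXY.
Qed.

Lemma orR_admissible A B G D Is M :
  node_admissible [BS G (A :: B :: D) Is M] (BS G (Or A B :: D) Is M).
Proof.
  node_intros. destruct (HD _ (in_eq _ _)) as [Hin|[HA HB]].
  - destruct (in_perm _ _ Hin) as (D2 & HP). reorder Gs (Or A B :: D2) Js Ms.
    apply cik_orR. premise (BS G (A :: B :: D) Is M).
    + apply cover_cons_suc; [simpl; auto|]. cover_by_incl.
    + apply cover_cons_suc; [simpl; auto|]. apply cover_cons_suc; [simpl; auto|].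
      cover_by_sub HXY.
  - premise (BS G (A :: B :: D) Is M); [auto|].
    apply cover_cons_suc; [exact HA|]. apply cover_cons_suc; [exact HB|].
    cover_by_sub HXY.
Qed.

Lemma impL_admissible A B G D Is M :
  node_admissible [BS (Imp A B :: G) (A :: D) Is M; BS (B :: G) D Is M]
                  (BS (Imp A B :: G) D Is M).
Proof.
  node_intros. destruct (HG _ (in_eq _ _)) as [Hin|HB].
  - destruct (in_perm _ _ Hin) as (G2 & HP). reorder (Imp A B :: G2) Ds Js Ms.
    apply cik_impL; [premise (BS (Imp A B :: G) (A :: D) Is M) | premise (BS (B :: G) D Is M)].
    + cover_by_incl.
    + apply cover_cons_suc; [simpl; auto|].
      cover_by_sub HXY.
    + apply cover_cons_ant; [simpl; auto|]. cover_by_incl.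
    + apply cover_cons_ant; [simpl; auto|].
      cover_by_sub HXY.
  - premise (BS (B :: G) D Is M); [auto|]. apply cover_cons_ant; [exact HB|].
    cover_by_sub HXY.
Qed.

Lemma impR_admissible A B G D Is M :
  node_admissible [BS G D (BS [A] [B] [] [] :: Is) M] (BS G (Imp A B :: D) Is M).
Proof.
  node_intros. destruct (HD _ (in_eq _ _)) as [Hin|(J & HJ & HA & HB)].
  - destruct (in_perm _ _ Hin) as (D2 & HP). reorder Gs (Imp A B :: D2) Js Ms.
    apply cik_impR. premise (BS G D (BS [A] [B] [] [] :: Is) M).
    + apply cover_cons_suc; [right; exists (BS [A] [B] [] []); simpl; auto|].
      cover_by_incl.
    + apply (cover_cons_imps _ (BS [A] [B] [] [])); [simpl; auto | apply cover_refl |].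
      cover_by_sub HXY.
  - premise (BS G D (BS [A] [B] [] [] :: Is) M); [auto|].
    apply (cover_cons_imps _ J); [exact HJ| |].
    + constructor; intros ? Hx; simpl in Hx; intuition (subst; assumption).
    + cover_by_sub HXY.
Qed.

Lemma boxR_admissible A G D Is M :
  node_admissible [BS G D (BS [] [] [] [BS [] [A] [] []] :: Is) M] (BS G (Box A :: D) Is M).
Proof.
  node_intros. destruct (HD _ (in_eq _ _)) as [Hin|(J & HJ & T & HT & HA)].
  - destruct (in_perm _ _ Hin) as (D2 & HP). reorder Gs (Box A :: D2) Js Ms.
    apply cik_boxR. premise (BS G D (BS [] [] [] [BS [] [A] [] []] :: Is) M).
    + apply cover_cons_suc.
      * right. exists (BS [] [] [] [BS [] [A] [] []]). split; [simpl; auto|].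
        exists (BS [] [A] [] []). simpl; auto.
      * cover_by_incl.
    + apply (cover_cons_imps _ (BS [] [] [] [BS [] [A] [] []])); [simpl; auto | apply cover_refl |].
      cover_by_sub HXY.
  - premise (BS G D (BS [] [] [] [BS [] [A] [] []] :: Is) M); [auto|].
    apply (cover_cons_imps _ J); [exact HJ| |].
    + apply (cover_cons_mods _ T); [exact HT| |constructor; intros ? []].
      constructor; intros ? Hx; simpl in Hx; intuition (subst; assumption).
    + cover_by_sub HXY.
Qed.

Lemma diaL_admissible A G D Is M :
  node_admissible [BS G D Is (BS [A] [] [] [] :: M)] (BS (Dia A :: G) D Is M).
Proof.
  node_intros. destruct (HG _ (in_eq _ _)) as [Hin|(T & HT & HA)].
  - destruct (in_perm _ _ Hin) as (G2 & HP). reorder (Dia A :: G2) Ds Js Ms.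
    apply cik_diaL. premise (BS G D Is (BS [A] [] [] [] :: M)).
    + apply cover_cons_ant; [right; exists (BS [A] [] [] []); simpl; auto|].
      cover_by_incl.
    + apply (cover_cons_mods _ (BS [A] [] [] [])); [simpl; auto | apply cover_refl |].
      cover_by_sub HXY.
  - premise (BS G D Is (BS [A] [] [] [] :: M)); [auto|].
    apply (cover_cons_mods _ T); [exact HT| |].
    + constructor; intros ? Hx; simpl in Hx; intuition (subst; assumption).
    + cover_by_sub HXY.
Qed.

Lemma boxL_admissible A G D Is M S P PI PM :
  node_admissible [BS (Box A :: G) D Is (BS (A :: S) P PI PM :: M)]
                  (BS (Box A :: G) D Is (BS S P PI PM :: M)).
Proof.
  node_intros. destruct (HG _ (in_eq _ _)) as [Hin|[]].
  destruct (HM _ (in_eq _ _)) as ([S1 P1 PI1 PM1] & HT & HcT).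
  destruct (in_perm _ _ Hin) as (G2 & HPG). destruct (in_perm _ _ HT) as (M2 & HPM).
  reorder (Box A :: G2) Ds Js (BS S1 P1 PI1 PM1 :: M2).
  apply cik_boxL. premise (BS (Box A :: G) D Is (BS (A :: S) P PI PM :: M)).
  - apply (cover_cons_mods _ (BS (A :: S1) P1 PI1 PM1)); [simpl; auto| |].
    + cover_by_incl.
    + cover_by_incl.
  - apply (cover_cons_mods _ (BS (A :: S1) P1 PI1 PM1)); [simpl; auto| |].
    + apply cover_cons_ant; [simpl; auto|].
      apply (cover_trans _ _ _ HcT). cover_by_incl.
    + cover_by_sub HXY.
Qed.

Lemma diaR_admissible A G D Is M S P PI PM :
  node_admissible [BS G (Dia A :: D) Is (BS S (A :: P) PI PM :: M)]
                  (BS G (Dia A :: D) Is (BS S P PI PM :: M)).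
Proof.
  node_intros. destruct (HD _ (in_eq _ _)) as [Hin|[]].
  destruct (HM _ (in_eq _ _)) as ([S1 P1 PI1 PM1] & HT & HcT).
  destruct (in_perm _ _ Hin) as (D2 & HPD). destruct (in_perm _ _ HT) as (M2 & HPM).
  reorder Gs (Dia A :: D2) Js (BS S1 P1 PI1 PM1 :: M2).
  apply cik_diaR. premise (BS G (Dia A :: D) Is (BS S (A :: P) PI PM :: M)).
  - apply (cover_cons_mods _ (BS S1 (A :: P1) PI1 PM1)); [simpl; auto| |].
    + cover_by_incl.
    + cover_by_incl.
  - apply (cover_cons_mods _ (BS S1 (A :: P1) PI1 PM1)); [simpl; auto| |].
    + apply cover_cons_suc; [simpl; auto|].
      apply (cover_trans _ _ _ HcT). cover_by_incl.
    + cover_by_sub HXY.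
Qed.

Lemma lcov_weaken_bstar F G M G' M' : lcov F G M -> incl G G' ->
  (forall T, In T M -> In (bstar T) M') -> lcov F G' M'.
Proof.
  intros H HG HM. apply (lcov_trans _ _ _ _ _ H); auto.
  intros T HT. exists (bstar T). split; [auto | apply lcov_incl_bstar].
Qed.

Lemma trans_admissible G G' D Is M S P PI PM :
  node_admissible [BS (G ++ G') D (BS (G' ++ S) P PI PM :: Is) M]
                  (BS (G ++ G') D (BS S P PI PM :: Is) M).
Proof.
  node_intros. destruct (HI _ (in_eq _ _)) as ([S1 P1 PI1 PM1] & HJ & HcJ).
  destruct (in_perm _ _ HJ) as (J2 & HP). reorder Gs Ds (BS S1 P1 PI1 PM1 :: J2) Ms.
  apply cik_trans_fc. premise (BS (G ++ G') D (BS (G' ++ S) P PI PM :: Is) M).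
  - apply (cover_cons_imps _ (BS (Gs ++ S1) P1 PI1 (map bstar Ms ++ PM1))); [simpl; auto| |].
    + cover_by_incl.
    + cover_by_incl.
  - apply (cover_cons_imps _ (BS (Gs ++ S1) P1 PI1 (map bstar Ms ++ PM1))); [simpl; auto| |].
    + assert (HJ' : cover (BS S P PI PM) (BS (Gs ++ S1) P1 PI1 (map bstar Ms ++ PM1))).
      { apply (cover_trans _ _ _ HcJ). cover_by_incl. }
      apply (cover_extend _ _ _ _ _ _ _ _ _ HJ'); auto.
      intros B HB. apply in_app_or in HB as [HB|HB]; [right|now left].
      apply (lcov_weaken_bstar _ Gs Ms); [apply HG, in_or_app; auto | solve_incl |].
      intros T HT. simpl. rewrite in_app_iff. left. now apply in_map.
    + cover_by_sub HXY.
Qed.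

Lemma inter_fc_admissible G D Is M S P PI PM T :
  node_admissible [BS G D (BS S P PI (bstar T :: PM) :: Is) (T :: M)]
                  (BS G D (BS S P PI PM :: Is) (T :: M)).
Proof.
  node_intros. destruct (HI _ (in_eq _ _)) as ([S1 P1 PI1 PM1] & HJ & HcJ).
  destruct (HM _ (in_eq _ _)) as (T' & HT & HcT).
  destruct (in_perm _ _ HJ) as (J2 & HPJ). destruct (in_perm _ _ HT) as (M2 & HPM).
  reorder Gs Ds (BS S1 P1 PI1 PM1 :: J2) (T' :: M2).
  apply cik_inter_fc. premise (BS G D (BS S P PI (bstar T :: PM) :: Is) (T :: M)).
  - apply (cover_cons_imps _ (BS S1 P1 PI1 (bstar T' :: PM1))); [simpl; auto| |].
    + cover_by_incl.
    + cover_by_incl.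
  - apply (cover_cons_imps _ (BS S1 P1 PI1 (bstar T' :: PM1))); [simpl; auto| |].
    + apply (cover_cons_mods _ (bstar T')); [simpl; auto | now apply cover_bstar |].
      apply (cover_trans _ _ _ HcJ). cover_by_incl.
    + cover_by_sub HXY.
Qed.

Lemma inter_bc_admissible G D Is M L Th ThI ThM Q :
  node_admissible [BS G D (BS [] [] [] [Q] :: Is) (BS L Th (Q :: ThI) ThM :: M)]
                  (BS G D Is (BS L Th (Q :: ThI) ThM :: M)).
Proof.
  node_intros. destruct (HM _ (in_eq _ _)) as ([L1 Th1 ThI1 ThM1] & HT & HcT).
  pose proof (cover_inv _ _ _ _ _ HcT) as (_ & _ & HQ & _). cbn [bimps] in HQ.
  destruct (HQ _ (in_eq _ _)) as (Q' & HQ' & HcQ).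
  destruct (in_perm _ _ HT) as (M2 & HPM). destruct (in_perm _ _ HQ') as (ThI2 & HPQ).
  reorder Gs Ds Js (BS L1 Th1 ThI1 ThM1 :: M2).
  change (cik (bfill c (bfill (BMod Gs Ds Js M2 BHole) (BS L1 Th1 ThI1 ThM1)))).
  rewrite <- bfill_comp.
  apply (cik_exch _ _ _ _ _ _ _ _ _ (Permutation_refl _) (Permutation_refl _)
           (Permutation_sym HPQ) (Permutation_refl _)).
  rewrite bfill_comp. cbn [bfill].
  apply cik_inter_bc. premise (BS G D (BS [] [] [] [Q] :: Is) (BS L Th (Q :: ThI) ThM :: M)).
  - apply (cover_cons_mods _ (BS L1 Th1 (Q' :: ThI2) ThM1)); [simpl; auto| |].
    + now apply cover_perm_r.
    + cover_by_incl.
  - apply (cover_cons_imps _ (BS [] [] [] [Q'])); [simpl; auto| |].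
    + apply (cover_cons_mods _ Q'); [simpl; auto | exact HcQ | cover_by_incl].
    + cover_by_sub HXY.
Qed.

Theorem cik_cover S S' : cik S -> cover S S' -> cik S'.
Proof.
  intro H; revert S'; induction H; (eapply cik_cover_of_node;
    [ first [ apply bot_admissible | apply top_admissible
            | apply ax_admissible | apply andL_admissible | apply andR_admissible
            | apply orL_admissible | apply orR_admissible | apply impL_admissible
            | apply impR_admissible | apply boxL_admissible | apply boxR_admissible
            | apply diaL_admissible | apply diaR_admissible | apply trans_admissible
            | apply inter_fc_admissible | apply inter_bc_admissible
            | eapply exch_admissible; eassumption ]
    | let Q := fresh "Q" in let HQ := fresh "HQ" in
      intros Q HQ; simpl in HQ; repeat destruct HQ as [<-|HQ];
      solve [assumption | contradiction] ]).
Qed.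

Lemma cik_cover_fill c X Y : cover X Y -> cik (bfill c X) -> cik (bfill c Y).
Proof. intros HXY H. apply (cik_cover _ _ H). now apply cover_ctx. Qed.

(** * Simulating NIKm *)

Fixpoint pseq_ind_nested (P : pseq -> Prop)
  (H : forall G D B, (forall X, In X B -> P X) -> P (PS G D B)) (s : pseq) : P s :=
  let fix all (l : list pseq) : forall X, In X l -> P X :=
    match l with
    | [] => fun X (HX : In X []) => match HX with end
    | Y :: l' => fun X HX =>
        match HX with
        | or_introl E => eq_ind Y P (pseq_ind_nested P H Y) X E
        | or_intror HX' => all l' X HX'
        end
    end in
  match s with PS G D B => H G D B (all B) end.

Lemma fl_perase T : fl (perase T) = bstar (fl T).
Proof.
  induction T as [G D B IH] using pseq_ind_nested. simpl. f_equal.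
  rewrite !map_map. now apply map_ext_in.
Qed.

Lemma map_fl_perase B : map fl (map perase B) = map bstar (map fl B).
Proof. rewrite !map_map. apply map_ext, fl_perase. Qed.

Fixpoint fl_ctx (c : pctx) : bctx :=
  match c with
  | PHole _ _ _ => BHole
  | PDown G D B c' => BMod G D [] (map fl B) (fl_ctx c')
  end.

Fixpoint hole_ant (c : pctx) : list form :=
  match c with PHole G _ _ => G | PDown _ _ _ c' => hole_ant c' end.
Fixpoint hole_suc (c : pctx) : list form :=
  match c with PHole _ D _ => D | PDown _ _ _ c' => hole_suc c' end.
Fixpoint hole_blocks (c : pctx) : list pseq :=
  match c with PHole _ _ B => B | PDown _ _ _ c' => hole_blocks c' end.

Lemma fl_pfill c G D B : fl (pfill c (PS G D B)) =
  bfill (fl_ctx c) (BS (hole_ant c ++ G) (hole_suc c ++ D) [] (map fl (hole_blocks c) ++ map fl B)).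
Proof. induction c; simpl; [now rewrite map_app | now rewrite IHc]. Qed.

Lemma cik_fl_pfill_l c G D B X : cik (fl (pfill c (PS G D B))) ->
  cover (BS (hole_ant c ++ G) (hole_suc c ++ D) [] (map fl (hole_blocks c) ++ map fl B)) X ->
  cik (bfill (fl_ctx c) X).
Proof. rewrite fl_pfill. intros H HX. exact (cik_cover_fill _ _ _ HX H). Qed.

Lemma cik_fl_pfill_r c G D B X :
  cover X (BS (hole_ant c ++ G) (hole_suc c ++ D) [] (map fl (hole_blocks c) ++ map fl B)) ->
  cik (bfill (fl_ctx c) X) -> cik (fl (pfill c (PS G D B))).
Proof. rewrite fl_pfill. apply cik_cover_fill. Qed.

(* The implication block travels from the hole to the root by [inter_bc]; at every node on the
   way, [trans] and [inter_fc] copy the antecedent and the starred siblings into it, which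
   rebuilds the output-free sequent around [q]. *)
Lemma cik_push c q cc :
  cik (bfill cc (BS [] [] [fl (pfill (pdown c) q)] [])) ->
  cik (bfill cc (bfill (fl_ctx c)
                   (BS (hole_ant c) (hole_suc c) [fl q] (map fl (hole_blocks c))))).
Proof.
  revert cc; induction c as [G D B | G D B c IH]; intros cc H.
  - destruct q as [QG QD QB]. cbn [fl_ctx bfill hole_ant hole_suc hole_blocks fl].
    apply cik_trans_fc. revert H. cbn [pdown pfill fl app].
    rewrite map_app, map_fl_perase. apply cik_cover_fill.
    cover_by_incl.
  - cbn [fl_ctx bfill hole_ant hole_suc hole_blocks].
    specialize (IH (bctx_comp cc (BMod G D [] (map fl B) BHole))).
    rewrite !bfill_comp in IH. apply IH. cbn [bfill]. apply cik_inter_bc, cik_trans_fc.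
    revert H. apply cik_cover_fill. cbn [pdown pfill fl map bstar].
    set (Q := fl (pfill (pdown c) q)). rewrite map_fl_perase.
    apply (cover_cons_imps _ (BS (G ++ []) [] [] (BS [] [] [] [] :: map bstar (map fl B) ++ [Q])));
      [simpl; auto | | cover_by_incl].
    cover_by_incl.
Qed.

Ltac via X := apply (cik_fl_pfill_r _ _ _ _ X); [cover_by_incl|].
Ltac from_premise H := apply (cik_fl_pfill_l _ _ _ _ _ H); cover_by_incl.

Section Simulation.
Variable c : pctx.
Let hG := hole_ant c.
Let hD := hole_suc c.
Let hB := map fl (hole_blocks c).

Lemma fl_exch G D B G' D' B' :
  Permutation G G' -> Permutation D D' -> Permutation B B' ->
  cik (fl (pfill c (PS G D B))) -> cik (fl (pfill c (PS G' D' B'))).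
Proof.
  intros HG HD HB. rewrite !fl_pfill. apply cik_cover_fill.
  apply cover_perm_r; auto using Permutation_app_head, Permutation_map.
Qed.

Lemma fl_bot : cik (fl (pfill c (pin Bot))).
Proof. via (BS (Bot :: hG) hD [] hB). apply cik_bot. Qed.

Lemma fl_ax p : cik (fl (pfill c (PS [Var p] [Var p] []))).
Proof. via (BS (Var p :: hG) (Var p :: hD) [] hB). apply cik_ax. Qed.

Lemma fl_and_in A B : cik (fl (pfill c (PS [A; B] [] []))) -> cik (fl (pfill c (pin (And A B)))).
Proof. intro H. via (BS (And A B :: hG) hD [] hB). apply cik_andL. from_premise H. Qed.

Lemma fl_and_out A B : cik (fl (pfill c (pout A))) -> cik (fl (pfill c (pout B))) ->
  cik (fl (pfill c (pout (And A B)))).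
Proof.
  intros H1 H2. via (BS hG (And A B :: hD) [] hB). 
  apply cik_andR; [from_premise H1 | from_premise H2].
Qed.

Lemma fl_or_in A B : cik (fl (pfill c (pin A))) -> cik (fl (pfill c (pin B))) ->
  cik (fl (pfill c (pin (Or A B)))).
Proof.
  intros H1 H2. via (BS (Or A B :: hG) hD [] hB). 
  apply cik_orL; [from_premise H1 | from_premise H2].
Qed.

Lemma fl_or_out A B : cik (fl (pfill c (PS [] [A; B] []))) -> cik (fl (pfill c (pout (Or A B)))).
Proof. intro H. via (BS hG (Or A B :: hD) [] hB). apply cik_orR. from_premise H. Qed.

Lemma fl_imp_in A B : cik (fl (pfill c (pout A))) -> cik (fl (pfill c (pin B))) ->
  cik (fl (pfill c (pin (Imp A B)))).
Proof.
  intros H1 H2. via (BS (Imp A B :: hG) hD [] hB). 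
  apply cik_impL; [from_premise H1 | from_premise H2].
Qed.

Lemma fl_imp_out A B : cik (fl (pfill (pdown c) (PS [A] [B] []))) ->
  cik (fl (pfill c (pout (Imp A B)))).
Proof.
  intro H. via (BS hG (Imp A B :: hD) [] hB). apply cik_impR.
  apply (cik_push c (PS [A] [B] []) BHole). exact (cik_fill _ (BImp [] [] [] [] BHole) H).
Qed.

Lemma fl_box_in A G D B : cik (fl (pfill c (PS [] [] [PS (A :: G) D B]))) ->
  cik (fl (pfill c (PS [Box A] [] [PS G D B]))).
Proof.
  intro H. via (BS (Box A :: hG) hD [] (BS G D [] (map fl B) :: hB)).
  apply cik_boxL. from_premise H.
Qed.

Lemma fl_box_out A : cik (fl (pfill (pdown c) (PS [] [] [pout A]))) ->
  cik (fl (pfill c (pout (Box A)))).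
Proof.
  intro H. via (BS hG (Box A :: hD) [] hB). apply cik_boxR.
  apply (cik_push c (PS [] [] [pout A]) BHole). exact (cik_fill _ (BImp [] [] [] [] BHole) H).
Qed.

Lemma fl_dia_in A : cik (fl (pfill c (PS [] [] [pin A]))) -> cik (fl (pfill c (pin (Dia A)))).
Proof. intro H. via (BS (Dia A :: hG) hD [] hB). apply cik_diaL. from_premise H. Qed.

Lemma fl_dia_out A G D B : cik (fl (pfill c (PS [] [] [PS G (A :: D) B]))) ->
  cik (fl (pfill c (PS [] [Dia A] [PS G D B]))).
Proof.
  intro H. via (BS hG (Dia A :: hD) [] (BS G D [] (map fl B) :: hB)).
  apply cik_diaR. from_premise H.
Qed.

Lemma fl_ctr_in A : cik (fl (pfill c (PS [A; A] [] []))) -> cik (fl (pfill c (pin A))).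
Proof. intro H. via (BS (hG ++ [A; A]) (hD ++ []) [] (hB ++ [])). from_premise H. Qed.

Lemma fl_ctr_out A : cik (fl (pfill c (PS [] [A; A] []))) -> cik (fl (pfill c (pout A))).
Proof. intro H. via (BS (hG ++ []) (hD ++ [A; A]) [] (hB ++ [])). from_premise H. Qed.

End Simulation.

Theorem theorem6p2 : forall S : pseq, nikm S -> cik (fl S).
Proof.
  induction 1; eauto using fl_exch, fl_bot, fl_ax, fl_and_in, fl_and_out, fl_or_in, fl_or_out,
    fl_imp_in, fl_imp_out, fl_box_in, fl_box_out, fl_dia_in, fl_dia_out, fl_ctr_in, fl_ctr_out.
Qed.
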